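(* Let $n=2^{n_1}3^{n_2}$ for some natural numbers $n_1,n_2$. In the one counter net $\mathcal{M}$ described in the context, Defender has a winning strategy in the branching bisimulation game starting from $(p_jX^{3n},p_j'X^{3n})$ if and only if Defender has a winning strategy in the branching bisimulation game starting from $(p_iX^{n},p_i'X^{n})$.
   Context: One counter nets: a tuple $(\mathcal{Q},X,\mathcal{A},\Delta)$ with finite state set $\mathcal{Q}$, place $X$, finite action set $\mathcal{A}\ni\tau$ ($\tau$ silent), and rules $pX^{i}\stackrel{\ell}{\longrightarrow}qX^{j}$ with $i\in\{0,1\}$, $j\ge0$; processes are $pX^{m}$; semantics $pX^{i+k}\stackrel{\ell}{\longrightarrow}qX^{j+k}$ for all $k\ge0$ whenever $pX^{i}\stackrel{\ell}{\longrightarrow}qX^{j}$ is a rule (a rule written $p\stackrel{\ell}{\longrightarrow}q$ means $i=j=0$). Write $\Longrightarrow$ for the reflexive transitive closure of $\stackrel{\tau}{\longrightarrow}$. Branching bisimilarity $\simeq$ is the largest relation $\mathcal{B}$ such that whenever $P\mathcal{B}Q$ and $P\stackrel{\ell}{\longrightarrow}P'$, either $Q\Longrightarrow Q''\stackrel{\ell}{\longrightarrow}Q'$ with $P\mathcal{B}Q''$ and $P'\mathcal{B}Q'$, or $\ell=\tau$ and $P'\mathcal{B}Q$; and symmetrically. The branching bisimulation game on a configuration $(P_0,P_1)$ is played in rounds by Attacker and Defender: Attacker picks $k\in\{0,1\}$ and a move $P_k\stackrel{\ell}{\longrightarrow}P_k'$; Defender either picks $P_{1-k}\Longrightarrow P_{1-k}''\stackrel{\ell}{\longrightarrow}P_{1-k}'$,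 after which Attacker chooses the next configuration among $(P_k,P_{1-k}'')$ and $(P_k',P_{1-k}')$, or (only if $\ell=\tau$) does nothing, and the next configuration is $(P_k',P_{1-k})$. Defender wins if it never gets stuck. Defender has a winning strategy from $(P,Q)$ iff $P\simeq Q$. The net $\mathcal{M}$: it has actions $a,t,c,\tau$ (among possibly others) and states $p_i,p_i',G',G,q_1,q_2,q_3,q_1',q_2',q_3',t_1,t_3,t',t''$, together with states $p_j,p_j'$ distinct from these, and contains the rules $p_i\stackrel{\tau}{\longrightarrow}G'$, $p_i'\stackrel{\tau}{\longrightarrow}G'$, $p_i\stackrel{a}{\longrightarrow}q_1$, $G'\stackrel{a}{\longrightarrow}q_1'$, $G'\stackrel{\tau}{\longrightarrow}G'X$, $G'X\stackrel{\tau}{\longrightarrow}G'$; $q_1\stackrel{a}{\longrightarrow}q_2$, $q_1'\stackrel{a}{\longrightarrow}q_2'$, $q_1\stackrel{t}{\longrightarrow}t_3$, $q_1'\stackrel{t}{\longrightarrow}t_1$; $q_2\stackrel{\tau}{\longrightarrow}G$, $q_2'\stackrel{\tau}{\longrightarrow}G$, $G\stackrel{\tau}{\longrightarrow}GX$, $GX\stackrel{\tau}{\longrightarrow}G$, $G\stackrel{a}{\longrightarrow}q_3$, $q_2'\stackrel{a}{\longrightarrow}q_3'$; $q_3\stackrel{a}{\longrightarrow}p_j$, $q_3'\stackrel{a}{\longrightarrow}p_j'$, $q_3\stackrel{t}{\longrightarrow}t_1$, $q_3'\stackrel{t}{\longrightarrow}t_1$; $t_3X\stackrel{c}{\longrightarrow}t''X$,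 $t''X\stackrel{c}{\longrightarrow}t'X$, $t'X\stackrel{c}{\longrightarrow}t_3$, $t_1X\stackrel{c}{\longrightarrow}t_1$. There are no other rules from the states $p_i,p_i',G',G,q_1,q_2,q_3,q_1',q_2',q_3',t_1,t_3,t',t''$; the rules from $p_j,p_j'$ are arbitrary. (This gadget encodes a Minsky machine instruction ''$i$: $c_2:=c_2+1$; goto $j$'' on the counter value $2^{n_1}3^{n_2}$.) *)

From mathcomp Require Import all_boot.
Set Implicit Arguments. Unset Strict Implicit. Unset Printing Implicit Defensive.

(* A rule (p, b, l, q, j) stands for  p X^i --l--> q X^j  with i = (b : nat),
   i.e. b = false means i = 0 and b = true means i = 1. *)
Record ocn := OCN {
  St : finType;
  Act : finType;
  tau : Act;
  rules : seq (St * bool * Act * St * nat)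
}.

(* processes p X^m *)
Definition proc (N : ocn) : Type := (St N * nat)%type.

Definition step (N : ocn) (P : proc N) (l : Act N) (P' : proc N) : Prop :=
  exists (i : bool) (j k : nat),
    (P.1, i, l, P'.1, j) \in rules N /\ P.2 = (i : nat) + k /\ P'.2 = j + k.

Inductive tau_star (N : ocn) : proc N -> proc N -> Prop :=
| ts_refl P : tau_star P P
| ts_step P P1 P2 : step P (tau N) P1 -> tau_star P1 P2 -> tau_star P P2.

Definition bb_transfer (N : ocn) (B : proc N -> proc N -> Prop) : Prop :=
  forall P Q, B P Q -> forall l P', step P l P' ->
    (exists Q'' Q', tau_star Q Q'' /\ step Q'' l Q' /\ B P Q'' /\ B P' Q')
    \/ (l = tau N /\ B P' Q).

Definition branching_bisimulation (N : ocn) (B : proc N -> proc N -> Prop) :=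
  bb_transfer B /\ bb_transfer (fun P Q => B Q P).

Definition bbisim (N : ocn) (P Q : proc N) : Prop :=
  exists B, branching_bisimulation B /\ B P Q.

(* The rules of the gadget for "i: c2 := c2+1; goto j" *)
Definition gadget_rules (N : ocn) (a t c : Act N)
  (pi pi' G' G q1 q2 q3 q1' q2' q3' t1 t3 t' t'' pj pj' : St N)
  : seq (St N * bool * Act N * St N * nat) :=
  [:: (pi, false, tau N, G', 0); (pi', false, tau N, G', 0);
      (pi, false, a, q1, 0); (G', false, a, q1', 0);
      (G', false, tau N, G', 1); (G', true, tau N, G', 0);
      (q1, false, a, q2, 0); (q1', false, a, q2', 0);
      (q1, false, t, t3, 0); (q1', false, t, t1, 0);
      (q2, false, tau N, G, 0); (q2', false, tau N, G, 0);
      (G, false, tau N, G, 1); (G, true, tau N, G, 0);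
      (G, false, a, q3, 0); (q2', false, a, q3', 0);
      (q3, false, a, pj, 0); (q3', false, a, pj', 0);
      (q3, false, t, t1, 0); (q3', false, t, t1, 0);
      (t3, true, c, t'', 1); (t'', true, c, t', 1);
      (t', true, c, t3, 0); (t1, true, c, t1, 0)].

From mathcomp Require Import all_boot.
Set Implicit Arguments. Unset Strict Implicit. Unset Printing Implicit Defensive.

(* If Attacker plays p_i -a-> q_1, Defender must leave p_i' through G', where it can pump the
   counter to any k before answering with q_1'.  The challenge t then compares the count-down
   from t_3 X^n, which spends one X per three c's and hence makes 3n steps, with the one from
   t_1 X^k, forcing k = 3n.  Symmetrically, Attacker's move q_2' -a-> q_3' sends Defender through
   G, and the t-challenge at q_3/q_3' forces the counter to stay 3n, so the play reaches
   (p_j X^3n, p_j' X^3n).  Conversely, Defender's canonical answers in this play, together with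
   pairs of equally long count-downs and a bisimulation for (p_j X^3n, p_j' X^3n), form a
   branching bisimulation containing (p_i X^n, p_i' X^n).  The argument works for every n. *)

Section BranchingBisimulation.
Variable N : ocn.
Implicit Types (P Q : proc N) (B : proc N -> proc N -> Prop).

Lemma tau_star_trans P Q R : tau_star P Q -> tau_star Q R -> tau_star P R.
Proof. by elim=> // P0 P1 P2 hs _ IH /IH; apply: ts_step. Qed.

Lemma tau_star_closed (S : proc N -> Prop) P Q :
  (forall X Y, S X -> step X (tau N) Y -> S Y) -> S P -> tau_star P Q -> S Q.
Proof.
move=> closedS SP ts; elim: ts SP => // P0 P1 P2 hs _ IH SP0.
by apply: IH; exact: closedS SP0 hs.
Qed.

Lemma tau_star_stuck P Q : (forall P', ~ step P (tau N) P') -> tau_star P Q -> Q = P.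
Proof. by move=> stuck ts; case: ts stuck => // P0 P1 P2 hs _ /(_ _ hs). Qed.

Lemma tau_star_counter (s : St N) :
  (forall m, step (s, m) (tau N) (s, m.+1)) -> (forall m, step (s, m.+1) (tau N) (s, m)) ->
  forall k k', tau_star (s, k) (s, k').
Proof.
move=> up down k k'; case: (leqP k k') => [/subnKC <- | /ltnW/subnKC <-].
- elim: (k' - k) => [|d IH]; first by rewrite addn0; exact: ts_refl.
  by apply: tau_star_trans IH _; rewrite addnS; apply: ts_step (up _) (ts_refl _).
- elim: (k - k') => [|d IH]; first by rewrite addn0; exact: ts_refl.
  by rewrite addnS; apply: ts_step (down _) IH.
Qed.

Fixpoint countdown (c : Act N) P (d : nat) : Prop :=
  match d with
  | 0 => forall l P', ~ step P l P'
  | d'.+1 => (exists P', step P c P') /\ forall l P', step P l P' -> l = c /\ countdown c P' d'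
  end.

Lemma countdown_tau_star c P d Q : c <> tau N -> countdown c P d -> tau_star P Q -> Q = P.
Proof.
move=> ctau cdP; apply: tau_star_stuck => P' sP.
by case: d cdP => [|d] /= cdP; [case: (cdP _ _ sP) | case: (cdP.2 _ _ sP) => /esym].
Qed.

Definition bb_answer B P Q l P' : Prop :=
  (exists Q'' Q', tau_star Q Q'' /\ step Q'' l Q' /\ B P Q'' /\ B P' Q') \/ (l = tau N /\ B P' Q).

Lemma bb_answer_match B P Q l P' Q'' Q' :
  tau_star Q Q'' -> step Q'' l Q' -> B P Q'' -> B P' Q' -> bb_answer B P Q l P'.
Proof. by move=> *; left; exists Q'', Q'. Qed.

Lemma bb_answer_stay B P Q P' : B P' Q -> bb_answer B P Q (tau N) P'.
Proof. by right. Qed.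

Lemma bb_transfer_visible B P Q l P' : bb_transfer B -> B P Q -> step P l P' -> l <> tau N ->
  exists Q'' Q', [/\ tau_star Q Q'', step Q'' l Q' & B P' Q'].
Proof.
move=> transB BPQ sP ltau.
by case: (transB _ _ BPQ _ _ sP) => [[Q'' [Q' [tsQ [sQ [_ BPQ']]]]]|[]//]; exists Q'', Q'.
Qed.

Lemma symmetric_branching_bisimulation B :
  (forall P Q, B P Q -> B Q P) -> bb_transfer B -> branching_bisimulation B.
Proof.
move=> symB transB; split=> // P Q /symB BQP l P' /(transB _ _ BQP)
  [[Q'' [Q' [tsQ [sQ [BPQ'' BPQ']]]]]|[ltau BP'Q]].
- by left; exists Q'', Q'; do !split=> //; apply: symB.
- by right; split; last apply: symB.
Qed.

Lemma bisim_countdown_eq c B P Q d1 d2 : c <> tau N -> branching_bisimulation B ->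
  B P Q -> countdown c P d1 -> countdown c Q d2 -> d1 = d2.
Proof.
move=> ctau [transB transB']; elim: d1 P Q d2 => [|d1 IH] P Q [|d2] //= BPQ cdP cdQ.
- have [[Q' sQ] _] := cdQ.
  have [P'' [P' [tsP sP _]]] := bb_transfer_visible transB' BPQ sQ ctau.
  by rewrite (countdown_tau_star (d := 0) ctau cdP tsP) in sP; case: (cdP _ _ sP).
- have [[P' sP] _] := cdP.
  have [Q'' [Q' [tsQ sQ _]]] := bb_transfer_visible transB BPQ sP ctau.
  by rewrite (countdown_tau_star (d := 0) ctau cdQ tsQ) in sQ; case: (cdQ _ _ sQ).
- have [[P' sP] cdP'] := cdP.
  have [Q'' [Q' [tsQ sQ BPQ']]] := bb_transfer_visible transB BPQ sP ctau.
  rewrite (countdown_tau_star (d := d2.+1) ctau cdQ tsQ) in sQ.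
  by rewrite (IH _ _ _ BPQ' (cdP' _ _ sP).2 (cdQ.2 _ _ sQ).2).
Qed.

End BranchingBisimulation.

(* [gadget_rules] with every state and action replaced by its position in the lists [states]
   and [acts] below; unlike the symbolic rules, these can be filtered by computation. *)
Definition gadget_code : seq (nat * bool * nat * nat * nat) :=
  [:: (0, false, 0, 2, 0); (1, false, 0, 2, 0); (0, false, 1, 4, 0); (2, false, 1, 7, 0);
      (2, false, 0, 2, 1); (2, true, 0, 2, 0); (4, false, 1, 5, 0); (7, false, 1, 8, 0);
      (4, false, 2, 11, 0); (7, false, 2, 10, 0); (5, false, 0, 3, 0); (8, false, 0, 3, 0);
      (3, false, 0, 3, 1); (3, true, 0, 3, 0); (3, false, 1, 6, 0); (8, false, 1, 9, 0);
      (6, false, 1, 14, 0); (9, false, 1, 15, 0); (6, false, 2, 10, 0); (9, false, 2, 10, 0);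
      (11, true, 3, 13, 1); (13, true, 3, 12, 1); (12, true, 3, 11, 0); (10, true, 3, 10, 0)].

Section Gadget.
Variables (N : ocn) (a t c : Act N).
Variables (pi pi' G' G q1 q2 q3 q1' q2' q3' t1 t3 t' t'' pj pj' : St N).

Local Notation acts := [:: tau N; a; t; c].
Local Notation states :=
  [:: pi; pi'; G'; G; q1; q2; q3; q1'; q2'; q3'; t1; t3; t'; t''; pj; pj'].
Local Notation gadget :=
  (gadget_rules a t c pi pi' G' G q1 q2 q3 q1' q2' q3' t1 t3 t' t'' pj pj').

Hypothesis acts_uniq : uniq acts.
Hypothesis states_uniq : uniq states.
Hypothesis gadget_sub : {subset gadget <= rules N}.
Hypothesis gadget_only : forall r, r \in rules N ->
  r.1.1.1.1 \in [:: pi; pi'; G'; G; q1; q2; q3; q1'; q2'; q3'; t1; t3; t'; t''] -> r \in gadget.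

Let acts_neq i j : i < 4 -> j < 4 -> i != j -> nth (tau N) acts i <> nth (tau N) acts j.
Proof. by move=> hi hj hij /eqP; rewrite nth_uniq // (negbTE hij). Qed.
Let a_neq_tau : a <> tau N := @acts_neq 1 0 isT isT isT.
Let t_neq_tau : t <> tau N := @acts_neq 2 0 isT isT isT.
Let c_neq_tau : c <> tau N := @acts_neq 3 0 isT isT isT.
Let t_neq_a : t <> a := @acts_neq 2 1 isT isT isT.

Definition decode_rule (e : nat * bool * nat * nat * nat) : St N * bool * Act N * St N * nat :=
  (nth pi states e.1.1.1.1, e.1.1.1.2, nth (tau N) acts e.1.1.2, nth pi states e.1.2, e.2).

Lemma gadget_rules_decode : gadget = map decode_rule gadget_code.
Proof. by []. Qed.

Lemma step_gadget_state k m l P' : k < 14 -> step (nth pi states k, m) l P' ->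
  exists2 e, e \in [seq e <- gadget_code | e.1.1.1.1 == k] & exists r,
    [/\ m = e.1.1.1.2 + r, l = nth (tau N) acts e.1.1.2 & P' = (nth pi states e.1.2, e.2 + r)].
Proof.
case: P' => q m' hk [i [j [r [rule [em em']]]]].
(* No [/=] here: it would unfold the filter over the symbolic [k], exponentially. *)
change (m = i + r) in em; change (m' = j + r) in em'; subst m m'.
have src : nth pi states k \in [:: pi; pi'; G'; G; q1; q2; q3; q1'; q2'; q3'; t1; t3; t'; t''].
  by rewrite -(nth_take pi hk) mem_nth.
move: (gadget_only rule src); rewrite gadget_rules_decode => /mapP[e he [ek -> -> -> ->]].
exists e; last by exists r.
have e_lt : e.1.1.1.1 < 16
  by apply: (allP (isT : all (fun e => e.1.1.1.1 < 16) gadget_code)).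
rewrite mem_filter he andbT eq_sym -(nth_uniq pi _ _ states_uniq) //; last exact: ltn_trans hk _.
exact/eqP.
Qed.

(* The filter is evaluated by the targeted [/=] first: rewriting with [inE] under the
   unevaluated filter is very slow. *)
Local Ltac gadget_inversion k :=
  case/(step_gadget_state (k := k)) => // e + [r [-> -> ->]];
  rewrite [_ \in _]/= !inE; do ?case/orP; move/eqP->.

Lemma step_pi m l P' : step (pi, m) l P' ->
  (l = tau N /\ P' = (G', m)) \/ (l = a /\ P' = (q1, m)).
Proof. by gadget_inversion 0; [left | right]. Qed.

Lemma step_pi' m l P' : step (pi', m) l P' -> l = tau N /\ P' = (G', m).
Proof. by gadget_inversion 1. Qed.

Lemma step_G' m l P' : step (G', m) l P' ->
  (l = a /\ P' = (q1', m)) \/ (l = tau N /\ exists k, P' = (G', k)).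
Proof. by gadget_inversion 2; [left | right; split; last eexists..]. Qed.

Lemma step_G m l P' : step (G, m) l P' ->
  (l = tau N /\ exists k, P' = (G, k)) \/ (l = a /\ P' = (q3, m)).
Proof. by gadget_inversion 3; [left; split; last eexists.. | right]. Qed.

Lemma step_q1 m l P' : step (q1, m) l P' ->
  (l = a /\ P' = (q2, m)) \/ (l = t /\ P' = (t3, m)).
Proof. by gadget_inversion 4; [left | right]. Qed.

Lemma step_q2 m l P' : step (q2, m) l P' -> l = tau N /\ P' = (G, m).
Proof. by gadget_inversion 5. Qed.

Lemma step_q3 m l P' : step (q3, m) l P' ->
  (l = a /\ P' = (pj, m)) \/ (l = t /\ P' = (t1, m)).
Proof. by gadget_inversion 6; [left | right]. Qed.

Lemma step_q1' m l P' : step (q1', m) l P' ->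
  (l = a /\ P' = (q2', m)) \/ (l = t /\ P' = (t1, m)).
Proof. by gadget_inversion 7; [left | right]. Qed.

Lemma step_q2' m l P' : step (q2', m) l P' ->
  (l = tau N /\ P' = (G, m)) \/ (l = a /\ P' = (q3', m)).
Proof. by gadget_inversion 8; [left | right]. Qed.

Lemma step_q3' m l P' : step (q3', m) l P' ->
  (l = a /\ P' = (pj', m)) \/ (l = t /\ P' = (t1, m)).
Proof. by gadget_inversion 9; [left | right]. Qed.

Lemma step_t1 m l P' : step (t1, m) l P' -> l = c /\ exists k, m = k.+1 /\ P' = (t1, k).
Proof. by gadget_inversion 10; split; last eexists. Qed.

Lemma step_t3 m l P' : step (t3, m) l P' -> l = c /\ exists k, m = k.+1 /\ P' = (t'', k.+1).
Proof. by gadget_inversion 11; split; last eexists. Qed.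

Lemma step_t' m l P' : step (t', m) l P' -> l = c /\ exists k, m = k.+1 /\ P' = (t3, k).
Proof. by gadget_inversion 12; split; last eexists. Qed.

Lemma step_t'' m l P' : step (t'', m) l P' -> l = c /\ exists k, m = k.+1 /\ P' = (t', k.+1).
Proof. by gadget_inversion 13; split; last eexists. Qed.

Lemma gadget_step s (i : bool) l q j k :
  (s, i, l, q, j) \in gadget -> step (s, i + k) l (q, j + k).
Proof. by move=> rule; exists i, j, k; split=> //; apply: gadget_sub. Qed.

Local Ltac gadget_rule :=
  rewrite /gadget_rules; do ![by rewrite in_cons eqxx | rewrite in_cons; apply/orP; right].
Local Ltac gadget_move :=
  first [ by apply: (gadget_step (i := false) (j := 0)); gadget_rule
        | by apply: (gadget_step (i := false) (j := 1)); gadget_rule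
        | by apply: (gadget_step (i := true) (j := 0)); gadget_rule
        | by apply: (gadget_step (i := true) (j := 1)); gadget_rule ].

Lemma tau_star_G' k k' : tau_star (G', k) (G', k').
Proof. by apply: tau_star_counter => m; gadget_move. Qed.

Lemma tau_star_G k k' : tau_star (G, k) (G, k').
Proof. by apply: tau_star_counter => m; gadget_move. Qed.

Lemma gadget_tau_stuck s m Q : s \in [:: q1'; q3; q3'] -> tau_star (s, m) Q -> Q = (s, m).
Proof.
rewrite !inE => /or3P[]/eqP-> /tau_star_stuck; apply=> P'.
- by case/step_q1' => [[/esym/a_neq_tau]|[/esym/t_neq_tau]].
- by case/step_q3 => [[/esym/a_neq_tau]|[/esym/t_neq_tau]].
- by case/step_q3' => [[/esym/a_neq_tau]|[/esym/t_neq_tau]].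
Qed.

Lemma countdown_t1 k : countdown c (t1, k) k.
Proof.
elim: k => [|k IH] /=; first by move=> l P' /step_t1[_ [k []]].
split; first by exists (t1, k); gadget_move.
by move=> l P' /step_t1[-> [k' [[<-] ->]]].
Qed.

Lemma countdown_t3 m : countdown c (t3, m) (3 * m).
Proof.
elim: m => [|m IH]; first by move=> l P' /step_t3[_ [k []]].
rewrite mulnS /=; split; first by exists (t'', m.+1); gadget_move.
move=> l P' /step_t3[-> [_ [[<-] ->]]]; split=> //.
split; first by exists (t', m.+1); gadget_move.
move=> l' P'' /step_t''[-> [_ [[<-] ->]]]; split=> //.
split; first by exists (t3, m); gadget_move.
by move=> l'' P3 /step_t'[-> [k [[<-] ->]]].
Qed.

Lemma weak_a_step_pi' m Q'' Q' :
  tau_star (pi', m) Q'' -> step Q'' a Q' -> exists k, Q' = (q1', k).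
Proof.
move=> ts; have : Q'' = (pi', m) \/ Q''.1 = G'.
  apply: (tau_star_closed (S := fun Q => Q = (pi', m) \/ Q.1 = G')) ts => [|]; last by left.
  move=> [s k] Y [[-> ->] /step_pi' [_ ->] | /= ->]; first by right.
  by case/step_G' => [[/esym/a_neq_tau]|[_ [k' ->]]]; right.
case=> [-> /step_pi' [/a_neq_tau] //|]; case: Q'' {ts} => s k /= ->.
by case/step_G' => [[_ ->]|[/a_neq_tau]]; first exists k.
Qed.

Lemma weak_a_step_q2 m Q'' Q' :
  tau_star (q2, m) Q'' -> step Q'' a Q' -> exists k, Q' = (q3, k).
Proof.
move=> ts; have : Q'' = (q2, m) \/ Q''.1 = G.
  apply: (tau_star_closed (S := fun Q => Q = (q2, m) \/ Q.1 = G)) ts => [|]; last by left.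
  move=> [s k] Y [[-> ->] /step_q2 [_ ->] | /= ->]; first by right.
  by case/step_G => [[_ [k' ->]]|[/esym/a_neq_tau]]; right.
case=> [-> /step_q2 [/a_neq_tau] //|]; case: Q'' {ts} => s k /= ->.
by case/step_G => [[/a_neq_tau]|[_ ->]] //; exists k.
Qed.

Section Soundness.
Variable B : proc N -> proc N -> Prop.
Hypothesis bisimB : branching_bisimulation B.

Lemma bisim_q1_q1' n k : B (q1, n) (q1', k) -> k = 3 * n.
Proof.
move=> Bq1; have q1_t : step (q1, n) t (t3, n) by gadget_move.
have [Q'' [Q' [ts sQ BQ']]] := bb_transfer_visible bisimB.1 Bq1 q1_t t_neq_tau.
rewrite (gadget_tau_stuck _ ts) ?inE ?eqxx // in sQ.
case/step_q1': sQ => [[/t_neq_a //]|[_ EQ']]; subst Q'.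
exact: esym (bisim_countdown_eq c_neq_tau bisimB BQ' (countdown_t3 n) (countdown_t1 k)).
Qed.

Lemma bisim_q3_q3' k m : B (q3, k) (q3', m) -> k = m.
Proof.
move=> Bq3; have q3'_t : step (q3', m) t (t1, m) by gadget_move.
have [P'' [P' [ts sP BP']]] := bb_transfer_visible bisimB.2 Bq3 q3'_t t_neq_tau.
rewrite (gadget_tau_stuck _ ts) ?inE ?eqxx ?orbT // in sP.
case/step_q3: sP => [[/t_neq_a //]|[_ EP']]; subst P'.
exact: bisim_countdown_eq c_neq_tau bisimB BP' (countdown_t1 k) (countdown_t1 m).
Qed.

Lemma bisim_pj_of_pi n : B (pi, n) (pi', n) -> B (pj, 3 * n) (pj', 3 * n).
Proof.
move=> Bpi; have pi_a : step (pi, n) a (q1, n) by gadget_move.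
have [Q1'' [Q1' [ts1 sQ1 Bq1]]] := bb_transfer_visible bisimB.1 Bpi pi_a a_neq_tau.
have [k EQ1'] := weak_a_step_pi' ts1 sQ1; subst Q1'.
have Ek := bisim_q1_q1' Bq1; subst k.
have q1_a : step (q1, n) a (q2, n) by gadget_move.
have [Q2'' [Q2' [ts2 sQ2 Bq2]]] := bb_transfer_visible bisimB.1 Bq1 q1_a a_neq_tau.
rewrite (gadget_tau_stuck _ ts2) ?inE ?eqxx // in sQ2.
case/step_q1': sQ2 => [[_ EQ2']|[/esym/t_neq_a //]]; subst Q2'.
have q2'_a : step (q2', 3 * n) a (q3', 3 * n) by gadget_move.
have [P3'' [P3' [ts3 sP3 Bq3]]] := bb_transfer_visible bisimB.2 Bq2 q2'_a a_neq_tau.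
have [k EP3'] := weak_a_step_q2 ts3 sP3; subst P3'.
have Ek := bisim_q3_q3' Bq3; subst k.
have q3_a : step (q3, 3 * n) a (pj, 3 * n) by gadget_move.
have [Q4'' [Q4' [ts4 sQ4 Bpj]]] := bb_transfer_visible bisimB.1 Bq3 q3_a a_neq_tau.
rewrite (gadget_tau_stuck _ ts4) ?inE ?eqxx ?orbT // in sQ4.
by case/step_q3': sQ4 => [[_ <-]|[/esym/t_neq_a]].
Qed.

End Soundness.

Section Completeness.
Variables (n : nat) (B : proc N -> proc N -> Prop).
Hypotheses (bisimB : branching_bisimulation B) (Bpj : B (pj, 3 * n) (pj', 3 * n)).

Inductive lift_rel : proc N -> proc N -> Prop :=
| lift_pi : lift_rel (pi, n) (pi', n)
| lift_pi_G' k : lift_rel (pi, n) (G', k)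
| lift_pi'_G' k : lift_rel (pi', n) (G', k)
| lift_G' k k' : lift_rel (G', k) (G', k')
| lift_q1 : lift_rel (q1, n) (q1', 3 * n)
| lift_q2 : lift_rel (q2, n) (q2', 3 * n)
| lift_q2_G k : lift_rel (q2, n) (G, k)
| lift_q2'_G k : lift_rel (q2', 3 * n) (G, k)
| lift_G k k' : lift_rel (G, k) (G, k')
| lift_q3 : lift_rel (q3, 3 * n) (q3', 3 * n)
| lift_refl P : lift_rel P P
| lift_countdown P Q d : countdown c P d -> countdown c Q d -> lift_rel P Q
| lift_base P Q : B P Q -> lift_rel P Q.

Let lift_sym P Q := lift_rel P Q \/ lift_rel Q P.

Local Ltac lift_sym_intro :=
  solve [ left; constructor; assumption | right; constructor; assumption
        | left; exact: lift_countdown (countdown_t3 _) (countdown_t1 _)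
        | right; exact: lift_countdown (countdown_t3 _) (countdown_t1 _) ].
Local Ltac weak_tau_path :=
  first [ exact: ts_refl | exact: tau_star_G' | exact: tau_star_G
        | by apply: (ts_step _ (tau_star_G' _ _)); gadget_move
        | by apply: (ts_step _ (tau_star_G _ _)); gadget_move ].
Local Ltac answer_stay := by apply: bb_answer_stay; lift_sym_intro.
Local Ltac answer_by Q'' Q' :=
  by apply: (bb_answer_match (Q'' := Q'') (Q' := Q'));
     [weak_tau_path | gadget_move | lift_sym_intro | lift_sym_intro].

Lemma lift_rel_forward P Q l P' : lift_rel P Q -> step P l P' -> bb_answer lift_sym P Q l P'.
Proof.
case=> [|k|k|k k'|||k|k|k k'||P0|P0 Q0 [|d] cdP cdQ|P0 Q0 BPQ] sP.
- case/step_pi: sP => -[-> ->]; [answer_stay | answer_by (G', 3 * n) (q1', 3 * n)].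
- case/step_pi: sP => -[-> ->]; [answer_stay | answer_by (G', 3 * n) (q1', 3 * n)].
- by case/step_pi': sP => -> ->; answer_stay.
- case/step_G': sP => [[-> ->]|[-> [k'' ->]]]; [answer_by (G', k) (q1', k) | answer_stay].
- case/step_q1: sP => -[-> ->].
  + answer_by (q1', 3 * n) (q2', 3 * n).
  + answer_by (q1', 3 * n) (t1, 3 * n).
- by case/step_q2: sP => -> ->; answer_stay.
- by case/step_q2: sP => -> ->; answer_stay.
- case/step_q2': sP => -[-> ->]; [answer_stay | answer_by (G, 3 * n) (q3, 3 * n)].
- case/step_G: sP => [[-> [k'' ->]]|[-> ->]]; [answer_stay | answer_by (G, k) (q3, k)].
- case/step_q3: sP => -[-> ->].
  + answer_by (q3', 3 * n) (pj', 3 * n).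
  + answer_by (q3', 3 * n) (t1, 3 * n).
- by apply: (bb_answer_match (ts_refl _) sP); lift_sym_intro.
- by case: (cdP _ _ sP).
- have [[Q' sQ] cdQ'] := cdQ; have [-> cdP'] := cdP.2 _ _ sP.
  apply: (bb_answer_match (ts_refl _) sQ); left; first exact: lift_countdown cdP cdQ.
  exact: lift_countdown cdP' (cdQ' _ _ sQ).2.
- case: (bisimB.1 _ _ BPQ _ _ sP) => [[Q'' [Q' [ts [sQ [B1 B2]]]]]|[-> B1]].
  + by apply: (bb_answer_match ts sQ); lift_sym_intro.
  + answer_stay.
Qed.

Lemma lift_rel_backward P Q l P' : lift_rel Q P -> step P l P' -> bb_answer lift_sym P Q l P'.
Proof.
case=> [|k|k|k k'|||k|k|k k'||P0|P0 Q0 d cdQ cdP|Q0 P0 BQP] sP.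
- by case/step_pi': sP => -> ->; answer_stay.
- case/step_G': sP => [[-> ->]|[-> [k'' ->]]]; [answer_by (G', k) (q1', k) | answer_stay].
- case/step_G': sP => [[-> ->]|[-> [k'' ->]]]; [answer_by (G', k) (q1', k) | answer_stay].
- exact: lift_rel_forward (lift_G' _ _) sP.
- case/step_q1': sP => -[-> ->].
  + answer_by (q1, n) (q2, n).
  + answer_by (q1, n) (t3, n).
- case/step_q2': sP => -[-> ->]; [answer_stay | answer_by (G, 3 * n) (q3, 3 * n)].
- case/step_G: sP => [[-> [k'' ->]]|[-> ->]]; [answer_stay | answer_by (G, k) (q3, k)].
- case/step_G: sP => [[-> [k'' ->]]|[-> ->]]; [answer_stay | answer_by (G, k) (q3, k)].
- exact: lift_rel_forward (lift_G _ _) sP.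
- case/step_q3': sP => -[-> ->].
  + answer_by (q3, 3 * n) (pj, 3 * n).
  + answer_by (q3, 3 * n) (t1, 3 * n).
- exact: lift_rel_forward (lift_refl _) sP.
- exact: lift_rel_forward (lift_countdown cdP cdQ) sP.
- case: (bisimB.2 _ _ BQP _ _ sP) => [[Q'' [Q' [ts [sQ [B1 B2]]]]]|[-> B1]].
  + by apply: (bb_answer_match ts sQ); lift_sym_intro.
  + answer_stay.
Qed.

Lemma lift_sym_bisim : branching_bisimulation lift_sym.
Proof.
apply: symmetric_branching_bisimulation => [P Q [] ?|P Q [] rPQ l P' sP]; [by right|by left| |].
- exact: lift_rel_forward rPQ sP.
- exact: lift_rel_backward rPQ sP.
Qed.

Lemma bbisim_pi_of_pj : bbisim (pi, n) (pi', n).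
Proof. by exists lift_sym; split; [exact: lift_sym_bisim | left; exact: lift_pi]. Qed.

End Completeness.

Lemma bbisim_gadget n : bbisim (pj, 3 * n) (pj', 3 * n) <-> bbisim (pi, n) (pi', n).
Proof.
split=> [[B [bisimB Bpj]]|[B [bisimB Bpi]]]; first exact: bbisim_pi_of_pj bisimB Bpj.
by exists B; split; last exact: (bisim_pj_of_pi bisimB Bpi).
Qed.

End Gadget.

Theorem lemma3 (N : ocn) (a t c : Act N)
  (pi pi' G' G q1 q2 q3 q1' q2' q3' t1 t3 t' t'' pj pj' : St N)
  (n1 n2 : nat) :
  uniq [:: tau N; a; t; c] ->
  uniq [:: pi; pi'; G'; G; q1; q2; q3; q1'; q2'; q3'; t1; t3; t'; t''; pj; pj'] ->
  {subset gadget_rules a t c pi pi' G' G q1 q2 q3 q1' q2' q3' t1 t3 t' t'' pj pj'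
     <= rules N} ->
  (forall r, r \in rules N ->
     r.1.1.1.1 \in [:: pi; pi'; G'; G; q1; q2; q3; q1'; q2'; q3'; t1; t3; t'; t''] ->
     r \in gadget_rules a t c pi pi' G' G q1 q2 q3 q1' q2' q3' t1 t3 t' t'' pj pj') ->
  let n := 2 ^ n1 * 3 ^ n2 in
  bbisim (pj, 3 * n) (pj', 3 * n) <-> bbisim (pi, n) (pi', n).
Proof.
move=> acts_uniq states_uniq gadget_sub gadget_only n.
exact: (bbisim_gadget acts_uniq states_uniq gadget_sub gadget_only n).
Qed.
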